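(* Let $a\in(0,\infty)$, let $\psi:[0,a]\to\mathbb{R}$ and let $0=a_0<a_1<\dots<a_M=a$ be a partition such that for each $m\in\{1,\dots,M\}$ the restriction of $\psi$ to $A_m=(a_{m-1},a_m)$ is continuous and strictly monotonic. Let $W\sim\mathcal{U}(0,a)$. Then the distribution function $F_{\psi(W)}$ of $\psi(W)$ is continuous. If, in addition, $\psi$ is continuous, then $F_{\psi(W)}$ is strictly monotonic on the range of $\psi$. *)

From HB Require Import structures.
From mathcomp Require Import all_boot all_order all_algebra.
From mathcomp Require Import all_classical all_reals all_analysis.
Set Implicit Arguments. Unset Strict Implicit. Unset Printing Implicit Defensive.
Import Order.TTheory GRing.Theory Num.Theory.
Import numFieldNormedType.Exports.
Local Open Scope classical_set_scope.
Local Open Scope ring_scope.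

(* Distribution function of psi(W), where W ~ U(0,a) is given by the
   library's uniform probability [uniform_prob] on [0,a] (the endpoints are
   null sets, so U[0,a] = U(0,a)). *)
Definition cdf_psi_unif (R : realType) (a : R) (ha : 0 < a) (psi : R -> R)
  (x : R) : R :=
  fine (uniform_prob ha [set w | psi w <= x]).

From HB Require Import structures.
From mathcomp Require Import all_boot all_order all_algebra.
From mathcomp Require Import all_classical all_reals all_analysis.
From mathcomp Require Import lra measurable_realfun.
Set Implicit Arguments. Unset Strict Implicit. Unset Printing Implicit Defensive.
Import Order.TTheory GRing.Theory Num.Theory.
Import numFieldNormedType.Exports.
Local Open Scope classical_set_scope.
Local Open Scope ring_scope.

(* The function F x = P(0 <= W <= a, psi W <= x) is the distribution function
   of the finite measure B |-> P(W in [0, a], psi W in B), which is well defined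
   because psi is measurable on [0, a]: it is continuous on each open piece, and
   the partition points are countable.  Such a function is nondecreasing and
   right-continuous, and its jump at x is the mass of the level set
   {w in [0, a] | psi w = x}.  Strict monotonicity on the pieces makes every
   level set meet each piece in at most one point; level sets are therefore
   countable, hence null for the uniform law, and F is continuous.
   If psi is continuous on [0, a] and x = psi u < y = psi v, the intermediate
   value theorem yields a point w0 between u and v with psi w0 = (x + y) / 2,
   and continuity at w0 a nondegenerate interval around w0 mapped into ]x, y[;
   this interval has positive uniform probability, so F x < F y. *)

Lemma nondecreasing_continuous_at (R : realFieldType) (F : R -> R) (x : R) :
  nondecreasing_fun F ->
  F (x + n.+1%:R^-1) @[n --> \oo] --> F x ->
  F (x - n.+1%:R^-1) @[n --> \oo] --> F x ->
  {for x, continuous F}.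
Proof.
move=> ndF /cvgrPdist_lt cvg_right /cvgrPdist_lt cvg_left.
apply/cvgrPdist_lt => e e0.
have [N1 _ hN1] := cvg_right e e0; have [N2 _ hN2] := cvg_left e e0.
pose n := maxn N1 N2; pose d : R := n.+1%:R^-1.
have d0 : 0 < d by rewrite invr_gt0.
move: (hN1 n (leq_maxl _ _)) (hN2 n (leq_maxr _ _)) => /=.
rewrite -/d !ltr_norml => /andP[r1 r2] /andP[l1 l2].
apply/nbhs_ballP; exists d => // t; rewrite /ball /= ltr_norml => /andP[t1 t2].
have lower : F (x - d) <= F t by apply: ndF; lra.
have upper : F t <= F (x + d) by apply: ndF; lra.
rewrite ltr_norml; apply/andP; split; lra.
Qed.

Lemma itvNyoEbigcup (R : realType) (x : R) :
  `]-oo, x[%classic = \bigcup_n `]-oo, x - n.+1%:R^-1]%classic.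
Proof.
apply/seteqP; split => [r|r [n _]] /=; rewrite in_itv /=.
- by move=> /ltr_add_invr[n rnx]; exists n => //=; rewrite in_itv /= lerBrDr ltW.
- by rewrite in_itv /= => /le_lt_trans; apply; rewrite ltrBlDr ltrDl invr_gt0.
Qed.

Section cdf_on.
Context d (T : measurableType d) (R : realType).
Variables (mu : {finite_measure set T -> \bar R}) (D : set T) (f : T -> R).

Definition cdf_on (x : R) : R := fine (mu (D `&` f @^-1` `]-oo, x])).

Hypotheses (mD : measurable D) (mf : measurable_fun D f).

Let measurable_preim B : measurable B -> measurable (D `&` f @^-1` B).
Proof. exact: mf. Qed.

Let fin_num_preim B : measurable B -> mu (D `&` f @^-1` B) \is a fin_num.
Proof. by move=> mB; apply: fin_num_measure; exact: measurable_preim. Qed.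

Lemma cdf_on_nondecreasing : nondecreasing_fun cdf_on.
Proof.
move=> x y xy; rewrite fine_le ?fin_num_preim //.
apply: le_measure; rewrite ?inE; [exact: measurable_preim | exact: measurable_preim |].
by apply: setIS; apply: preimage_subset; apply: subset_itvl; rewrite bnd_simp.
Qed.

Lemma cvg_cdf_on_right x :
  cdf_on (x + n.+1%:R^-1) @[n --> \oo] --> cdf_on x.
Proof.
apply: fine_cvg; rewrite fineK ?fin_num_preim //.
rewrite (itvNycEbigcap false) preimage_bigcap -bigcapIr //.
apply: nonincreasing_cvg_mu => [|n||m n mn].
- by rewrite -ge0_fin_numE ?fin_num_preim.
- exact: measurable_preim.
- by apply: bigcap_measurableType => n _; exact: measurable_preim.
- apply/subsetPset; apply: setIS; apply: preimage_subset; apply: subset_itvl.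
  by rewrite bnd_simp lerD2l lef_pV2 ?posrE // ler_nat.
Qed.

Lemma cvg_cdf_on_left x :
  cdf_on (x - n.+1%:R^-1) @[n --> \oo] --> fine (mu (D `&` f @^-1` `]-oo, x[)).
Proof.
apply: fine_cvg; rewrite fineK ?fin_num_preim //.
rewrite itvNyoEbigcup preimage_bigcup setI_bigcupr.
apply: nondecreasing_cvg_mu => [n||m n mn].
- exact: measurable_preim.
- by apply: bigcup_measurable => n _; exact: measurable_preim.
- apply/subsetPset; apply: setIS; apply: preimage_subset; apply: subset_itvl.
  by rewrite bnd_simp lerD2l lerN2 lef_pV2 ?posrE // ler_nat.
Qed.

Lemma cdf_on_continuous x :
  mu (D `&` f @^-1` [set x]) = 0%E -> {for x, continuous cdf_on}.
Proof.
move=> atom0; apply: nondecreasing_continuous_at.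
- exact: cdf_on_nondecreasing.
- exact: cvg_cdf_on_right.
suff -> : cdf_on x = fine (mu (D `&` f @^-1` `]-oo, x[)) by exact: cvg_cdf_on_left.
rewrite /cdf_on -(@setUitv1 _ _ _ _ true) // preimage_setU setIUr.
rewrite measureU; [|exact: measurable_preim|exact: measurable_preim|].
  by congr fine; rewrite -[RHS]adde0; congr (_ + _); exact: atom0.
rewrite -setIIr -preimage_setI; apply/seteqP; split => // w [_ []] /=.
by rewrite in_itv /= => /lt_eqF/negbT/eqP.
Qed.

Lemma cdf_on_lt x y : x <= y ->
  (0 < mu (D `&` f @^-1` `]x, y]))%E -> cdf_on x < cdf_on y.
Proof.
move=> xy pos; rewrite /cdf_on.
rewrite (@itv_bndbnd_setU _ _ _ (BRight x) (BRight y)) ?bnd_simp //.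
rewrite preimage_setU setIUr measureU; first last.
- rewrite -setIIr -preimage_setI; apply/seteqP; split => // w [_ /=].
  by rewrite !in_itv /= => -[fx /andP[xf _]]; move: (le_lt_trans fx xf); rewrite ltxx.
- exact: measurable_preim.
- exact: measurable_preim.
by rewrite fine_lt ?fin_numD ?fin_num_preim // lteDl ?fin_num_preim.
Qed.
End cdf_on.

Lemma countableU T (A B : set T) : countable A -> countable B -> countable (A `|` B).
Proof.
move=> cA cB; rewrite -bigcup2E; apply: bigcup_countable; first exact: countableP.
by move=> [|[|i]] _ //=; exact: countable0.
Qed.

Lemma subset1_countable T (A : set T) : is_subset1 A -> countable A.
Proof.
move=> A1; have [->|/set0P[w Aw]] := eqVneq A set0; first exact: countable0.
by apply: sub_countable (countable1 w); apply: subset_card_le => v Av; exact: A1.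
Qed.

Section uniform_probability.
Context (R : realType) (a b : R) (ab : a < b).

Lemma countable_uniform_prob0 (A : set R) : countable A -> uniform_prob ab A = 0%E.
Proof.
move=> cA; have mA : measurable A by apply: countable_measurable cA => t.
apply: (@dominates_uniform_prob _ _ _ ab A) => // B _ BA.
by apply: countable_lebesgue_measure0; apply: sub_countable cA; exact: subset_card_le.
Qed.

Lemma uniform_prob_itv_oo (s t : R) : a <= s -> s <= t -> t <= b ->
  uniform_prob ab `]s, t[%classic = ((t - s) / (b - a))%:E.
Proof.
move=> le_as le_st le_tb; rewrite /uniform_prob (eq_integral (fun=> (b - a)^-1%:E)).
  rewrite integral_cst //; set L := (X in (_ * X)%E).
  have -> : L = (t - s)%:E.
    rewrite /L; etransitivity; first exact: lebesgue_measure_itv.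
    rewrite /= lte_fin; case: ltP => [_|ts]; first by rewrite -EFinD.
    have -> : t = s by apply/le_anti; rewrite ts le_st.
    by rewrite subrr.
  by rewrite -EFinM mulrC.
move=> w; rewrite inE /= in_itv /= => /andP[sw wt].
by rewrite /uniform_pdf ifT //; apply/andP; split; lra.
Qed.

End uniform_probability.

Lemma exists_itv_sub_preimage (R : realType) (f : R -> R) (l h y1 y2 : R) :
  l <= h -> {within `[l, h], continuous f} -> y1 < y2 ->
  Num.min (f l) (f h) <= y1 -> y2 <= Num.max (f l) (f h) ->
  exists s t, [/\ l <= s, s < t, t <= h & `]s, t[ `<=` f @^-1` `]y1, y2[].
Proof.
move=> lh cf y12 min_le max_ge.
have [c] : exists2 c, c \in `[l, h] & f c = (y1 + y2) / 2.
  by apply: IVT => //; apply/andP; split; lra.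
rewrite in_itv /= => /andP[lc ch] fc.
have [lc' ch'] : l < c /\ c < h.
  rewrite !lt_neqAle lc ch !andbT; split; apply/eqP => e; subst c;
  by move: min_le max_ge; rewrite ge_min le_max => /orP[] ? /orP[] ?; lra.
have /cvgrPdist_lt/(_ ((y2 - y1) / 2)) : {for c, continuous f}.
  have [+ _ _] := (continuous_within_itvP f (lt_trans lc' ch')).1 cf.
  by apply; rewrite in_itv /= lc' ch'.
case/(_ _)/nbhs_ballP => [|r r0 near_c]; first lra.
pose r' := Num.min r (Num.min (c - l) (h - c)).
have r'r : r' <= r by rewrite ge_min lexx.
have r'l : r' <= c - l by rewrite !ge_min lexx orbT.
have r'h : r' <= h - c by rewrite !ge_min lexx !orbT.
have r'0 : 0 < r' by rewrite !lt_min r0 !subr_gt0 lc' ch'.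
exists (c - r'), (c + r'); split; [lra | lra | lra |].
move=> w /=; rewrite !in_itv /= => /andP[w1 w2].
have /near_c : ball c r w by rewrite /ball /= ltr_norml; apply/andP; split; lra.
by rewrite /= fc ltr_norml => /andP[? ?]; apply/andP; split; lra.
Qed.

Section piecewise_monotone.
Context (R : realType) (a : R) (psi : R -> R) (M : nat) (ap : nat -> R).
Hypotheses (ap0 : ap 0%N = 0) (apM : ap M = a).

Lemma itv_partition :
  `[0, a]%classic `<=` \bigcup_(m in `I_M) `]ap m, ap m.+1[%classic `|` range ap.
Proof.
rewrite -ap0 -apM; suff cover k : (k <= M)%N ->
    `[ap 0%N, ap k]%classic `<=`
    \bigcup_(m in `I_M) `]ap m, ap m.+1[%classic `|` range ap.
  exact: cover.
elim: k => [_ w|k IH kM w]; rewrite /= in_itv /= => /andP[w0 wk].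
  by right; exists 0%N => //; apply/le_anti; rewrite w0 wk.
have [wk'|kw] := leP w (ap k).
  by case: (IH (ltnW kM) w); [rewrite /= in_itv /= w0 | left | right].
have [->|wk1] := eqVneq w (ap k.+1); first by right; exists k.+1.
by left; exists k => //=; rewrite in_itv /= kw lt_neqAle wk1.
Qed.

Hypothesis psi_cont : forall m, (m < M)%N ->
  {within `]ap m, ap m.+1[, continuous psi}.

Lemma measurable_fun_piecewise_continuous : measurable_fun `[0, a]%classic psi.
Proof.
have mrange : measurable (range ap).
  by apply: countable_measurable => [t|]; [exact: measurable_set1 | exact: card_image_le].
apply: measurable_funS itv_partition _.
  by apply: measurableU => //; apply: bigcup_measurable => m _; exact: measurable_itv.
apply/measurable_funU => //.
  by apply: bigcup_measurable => m _; exact: measurable_itv.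
split.
  rewrite bigcup_mkcond; apply/measurable_fun_bigcup => [m|m].
    by case: ifP => // _; exact: measurable_itv.
  case: ifPn => [/[!inE] mM|_]; last exact: measurable_fun_set0.
  by apply: subspace_continuous_measurable_fun => //; exact: psi_cont.
rewrite -bigcup_imset1; apply/measurable_fun_bigcup => // m.
exact: measurable_fun_set1.
Qed.

Hypothesis psi_mono : forall m, (m < M)%N ->
  {in `]ap m, ap m.+1[ &, {homo psi : x y / x < y}} \/
  {in `]ap m, ap m.+1[ &, {homo psi : x y / x < y >-> y < x}}.

Lemma countable_level_set x : countable (`[0, a]%classic `&` psi @^-1` [set x]).
Proof.
apply: (@sub_countable _ _ _ ((\bigcup_(m in `I_M)
    (`]ap m, ap m.+1[%classic `&` psi @^-1` [set x])) `|` range ap)).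
  apply: subset_card_le => w [/itv_partition[[m mM Iw]|] psi_w]; last by right.
  by left; exists m.
apply: countableU; last exact: card_image_le.
apply: bigcup_countable => [|m mM]; first exact: countableP.
apply: subset1_countable => w1 w2 [I1 /= psi1] [I2 /= psi2].
have inj : {in `]ap m, ap m.+1[ &, injective psi}.
  case: (psi_mono mM) => mono; [apply: inc_inj_in; exact: le_mono_in mono |].
  by apply/dec_inj_in/le_nmono_in => u v Iu Iv vu; exact: mono.
by apply: inj; rewrite ?inE // psi1 psi2.
Qed.

End piecewise_monotone.

Section uniform_transform.
Context (R : realType) (a : R) (ha : 0 < a) (psi : R -> R).

Lemma cdf_psi_unifE : cdf_psi_unif ha psi = cdf_on (uniform_prob ha) `[0, a] psi.
Proof.
apply/funext => x; rewrite /cdf_psi_unif /cdf_on /uniform_prob.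
by rewrite integral_uniform_pdf setIC.
Qed.

Lemma uniform_prob_preimage_gt0 (u v : R) :
  {within `[0, a], continuous psi} -> 0 <= u <= a -> 0 <= v <= a ->
  psi u < psi v ->
  (0 < uniform_prob ha (`[0%R, a] `&` psi @^-1` `]psi u, psi v]))%E.
Proof.
move=> cpsi /andP[u0 ua] /andP[v0 va] lt_uv.
have [l [h [lh l0 ha' min_le max_ge]]] : exists l h, [/\ l <= h, 0 <= l, h <= a,
    Num.min (psi l) (psi h) <= psi u & psi v <= Num.max (psi l) (psi h)].
  have [uv|/ltW vu] := leP u v; [exists u, v | exists v, u];
  by split; rewrite ?ge_min ?le_max ?lexx ?orbT.
have cpsi_lh : {within `[l, h], continuous psi}.
  apply: continuous_subspaceW cpsi => w /=; rewrite !in_itv /= => /andP[lw wh].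
  by apply/andP; split; lra.
have [s [t [ls st th sub]]] := exists_itv_sub_preimage lh cpsi_lh lt_uv min_le max_ge.
apply: (@lt_le_trans _ _ (uniform_prob ha `]s, t[%classic)).
  by rewrite uniform_prob_itv_oo ?lte_fin ?subr0 ?divr_gt0 ?subr_gt0 //; lra.
apply: le_measure; rewrite ?inE.
- exact: measurable_itv.
- have mpsi : measurable_fun `[0%R, a] psi.
    by apply: subspace_continuous_measurable_fun => //; exact: measurable_itv.
  exact: mpsi (measurable_itv _) _ (measurable_itv _).
move=> w Iw; have := sub _ Iw; move: Iw.
rewrite /= !in_itv /= => /andP[sw wt] /andP[uw wv].
by split; apply/andP; split; lra.
Qed.

End uniform_transform.

Theorem propositionA1 (R : realType) (a : R) (ha : 0 < a) (psi : R -> R)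
  (M : nat) (ap : nat -> R)
  (hM : (0 < M)%N) (h0 : ap 0%N = 0) (hMa : ap M = a)
  (hinc : forall m : nat, (m < M)%N -> ap m < ap m.+1)
  (hcont : forall m : nat, (m < M)%N ->
     {within `]ap m, ap m.+1[, continuous psi})
  (hmono : forall m : nat, (m < M)%N ->
     {in `]ap m, ap m.+1[ &, {homo psi : x y / x < y}} \/
     {in `]ap m, ap m.+1[ &, {homo psi : x y / x < y >-> y < x}}) :
  continuous (cdf_psi_unif ha psi) /\
  ({within `[0, a], continuous psi} ->
   forall x y : R, (psi @` `[0, a]) x -> (psi @` `[0, a]) y -> x < y ->
     cdf_psi_unif ha psi x < cdf_psi_unif ha psi y).
Proof.
have mpsi := measurable_fun_piecewise_continuous h0 hMa hcont.
rewrite cdf_psi_unifE; split.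
  move=> x; apply: cdf_on_continuous => //.
  exact/countable_uniform_prob0/(countable_level_set h0 hMa hmono).
move=> cpsi _ _ [u u0a <-] [v v0a <-] lt_uv.
apply: cdf_on_lt => //; first exact: ltW.
exact: uniform_prob_preimage_gt0.
Qed.
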